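(* Let $N$ be a positive integer, $a,b,c\in\mathbb{R}$ with $a\neq0$, $W=[w_{ij}]\in\mathbb{R}^{N\times N}$ with $w_{ii}=0$ for all $i$, $\Delta=\mathrm{diag}(\delta_1,\dots,\delta_N)$ with $\delta_i\in\{0,1\}$, and $h>0$. Put $\Phi_s=e^{ah}I_N+\frac{c}{a}(e^{ah}-1)W$ and $\Psi_s=\frac{b}{a}(e^{ah}-1)\Delta$. If the continuous-time system $\dot X(t)=(aI_N+cW)X(t)+b\Delta U(t)$ is controllable, then the discrete-time system $X(k+1)=\Phi_sX(k)+\Psi_sU(k)$ is controllable.
   Context: The discrete system is the periodic sampling (period $h$, zero-order hold) of the continuous one. The continuous-time system is controllable in the usual sense (equivalently $\mathrm{rank}[sI_N-(aI_N+cW),\ b\Delta]=N$ for all $s\in\mathbb{C}$). The discrete-time system is called controllable if every initial state can be steered to the origin in finitely many steps. *)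

From HB Require Import structures.
From mathcomp Require Import all_boot all_order all_algebra.
From mathcomp Require Import all_classical all_reals all_analysis.
Set Implicit Arguments. Unset Strict Implicit. Unset Printing Implicit Defensive.
Import Order.TTheory GRing.Theory Num.Theory.
Local Open Scope ring_scope.

Definition ctrb_mx (R : comNzRingType) (N m : nat) (A : 'M[R]_N) (B : 'M[R]_(N, m)) :=
  \mxrow_(i < N) (A ^+ i *m B).

(* Continuous-time system x' = A x + B u is controllable (usual sense,
   Kalman rank criterion): rank [B, AB, ..., A^(N-1)B] = N. *)
Definition cont_controllable (R : fieldType) (N m : nat) (A : 'M[R]_N) (B : 'M[R]_(N, m)) : Prop :=
  \rank (ctrb_mx A B) = N.

Fixpoint disc_traj (R : nzRingType) (N m : nat) (Phi : 'M[R]_N) (Psi : 'M[R]_(N, m))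
  (x0 : 'cV[R]_N) (u : nat -> 'cV[R]_m) (k : nat) : 'cV[R]_N :=
  match k with
  | 0 => x0
  | k'.+1 => Phi *m disc_traj Phi Psi x0 u k' + Psi *m u k'
  end.

Definition disc_controllable (R : nzRingType) (N m : nat) (Phi : 'M[R]_N) (Psi : 'M[R]_(N, m)) : Prop :=
  forall x0 : 'cV[R]_N, exists (k : nat) (u : nat -> 'cV[R]_m), disc_traj Phi Psi x0 u k = 0.

Definition Delta_mx {R : nzRingType} (N : nat) (delta : 'I_N -> bool) : 'M[R]_N :=
  diag_mx (\row_i (delta i)%:R).

From HB Require Import structures.
From mathcomp Require Import all_boot all_order all_algebra.
From mathcomp Require Import all_classical all_reals all_analysis.
From mathcomp Require Import zify ring.
Set Implicit Arguments. Unset Strict Implicit. Unset Printing Implicit Defensive.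
Import Order.TTheory GRing.Theory Num.Theory.
Local Open Scope ring_scope.

(* With A = aI + cW, B = b Delta and k = (e^(ah) - 1)/a, nonzero since ah <> 0,
   the sampled pair is (I + kA, kB).  For k, l <> 0 the binomial formula writes
   each B^T (alpha I + k A^T)^i, i < N, as a combination of the B^T (A^T)^j with
   j <= i, and the relation is symmetric; so passing from (A, B) to
   (alpha I + kA, lB) preserves the rank of the controllability matrix.  A right
   inverse of the full row rank controllability matrix of the sampled pair then
   gives inputs steering any initial state to 0 in N steps. *)

Section KrylovSpace.
Variables (F : fieldType) (n m : nat).
Local Notation N := n.+1.

Definition krylov_mx (B : 'M[F]_(m, N)) (A : 'M[F]_N) : 'M[F]_N :=
  (\sum_(i < N) <<B *m A ^+ i>>)%MS.

Lemma krylov_mx_affine_sub (B : 'M[F]_(m, N)) (A : 'M[F]_N) (alpha k l : F) :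
  (krylov_mx (l *: B) (alpha%:M + k *: A) <= krylov_mx B A)%MS.
Proof.
apply/sumsmx_subP => i _; rewrite genmxE exprDn_comm; last exact/esym/scalar_mxC.
rewrite mulmx_sumr; apply: summx_sub => j _.
rewrite -scaler_nat -scalemxAr; apply: scalemx_sub.
rewrite -[alpha%:M ^+ _]rmorphXn /= -mulmxE mul_scalar_mx exprZn -!scalemxAr -scalemxAl.
do 3!apply: scalemx_sub.
have ltjN : (j < N)%N by rewrite (leq_ltn_trans _ (ltn_ord i)) // -ltnS.
by apply: (sumsmx_sup (Ordinal ltjN)) => //; rewrite genmxE.
Qed.

Lemma krylov_mx_affine (B : 'M[F]_(m, N)) (A : 'M[F]_N) (alpha k l : F) :
  k != 0 -> l != 0 ->
  (krylov_mx (l *: B) (alpha%:M + k *: A) :=: krylov_mx B A)%MS.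
Proof.
move=> k0 l0; apply/eqmxP; rewrite krylov_mx_affine_sub /=.
have eA : A = (- (k^-1 * alpha))%:M + k^-1 *: (alpha%:M + k *: A).
  rewrite scalerDr scale_scalar_mx scalerA mulVf // scale1r addrA -raddfD /=.
  by rewrite addNr raddf0 add0r.
have eB : B = l^-1 *: (l *: B) by rewrite scalerA mulVf // scale1r.
rewrite [X in (krylov_mx _ X <= _)%MS]eA [X in (krylov_mx X _ <= _)%MS]eB.
exact: krylov_mx_affine_sub.
Qed.

Lemma trmxX (A : 'M[F]_N) i : (A ^+ i)^T = A^T ^+ i.
Proof.
by elim: i => [|i IHi]; rewrite ?trmx1 // exprS exprSr -mulmxE trmx_mul IHi.
Qed.

Lemma ctrb_mx_trE (A : 'M[F]_N) (B : 'M[F]_(N, m)) :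
  ((ctrb_mx A B)^T :=: krylov_mx B^T A^T)%MS.
Proof.
rewrite /ctrb_mx tr_mxrow (eq_mxcol (fun i => trmx_mul _ _)).
by rewrite (eq_mxcol (fun i => congr1 (mulmx _) (trmxX A i))); exact: eqmx_col.
Qed.

Lemma mxrank_ctrb_affine (A : 'M[F]_N) (B : 'M[F]_(N, m)) (alpha k l : F) :
  k != 0 -> l != 0 ->
  \rank (ctrb_mx (alpha%:M + k *: A) (l *: B)) = \rank (ctrb_mx A B).
Proof.
move=> k0 l0; rewrite -mxrank_tr -[RHS]mxrank_tr !ctrb_mx_trE.
by rewrite linearD !linearZ /= tr_scalar_mx krylov_mx_affine.
Qed.

End KrylovSpace.

Lemma disc_traj_sum (R : nzRingType) (N m : nat) (Phi : 'M[R]_N) (Psi : 'M[R]_(N, m))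
    (x0 : 'cV[R]_N) (u : nat -> 'cV[R]_m) (k : nat) :
  disc_traj Phi Psi x0 u k =
  Phi ^+ k *m x0 + \sum_(j < k) Phi ^+ j *m Psi *m u (k.-1 - j)%N.
Proof.
elim: k => [|k IHk]; first by rewrite big_ord0 expr0 mul1mx addr0.
rewrite /= IHk big_ord_recl /= subn0 expr0 mul1mx mulmxDr mulmxA exprS -mulmxE.
rewrite mulmx_sumr -addrA; congr (_ + _); rewrite addrC; congr (_ + _).
apply: eq_bigr => j _; rewrite !mulmxA /bump /= exprS -mulmxE; congr (_ *m u _).
by lia.
Qed.

(* Inputs are read from v in reverse: u j is the block of v multiplying Phi^(n - j) Psi. *)
Lemma disc_traj_ctrb_mx (R : comNzRingType) (n m : nat) (Phi : 'M[R]_n.+1)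
    (Psi : 'M[R]_(n.+1, m)) (x0 : 'cV[R]_n.+1) (v : 'cV[R]_(\sum_(i < n.+1) m)) :
  disc_traj Phi Psi x0 (fun j => submxcol v (inord (n - j))) n.+1 =
  Phi ^+ n.+1 *m x0 + ctrb_mx Phi Psi *m v.
Proof.
rewrite disc_traj_sum -[v in RHS]submxcolK /ctrb_mx mul_mxrow_mxcol; congr (_ + _).
apply: eq_bigr => j _; congr (_ *m submxcol v _).
by apply: val_inj; rewrite /= subKn ?inordK // -ltnS.
Qed.

Lemma row_free_disc_controllable (F : fieldType) (n m : nat) (Phi : 'M[F]_n.+1)
    (Psi : 'M[F]_(n.+1, m)) :
  row_free (ctrb_mx Phi Psi) -> disc_controllable Phi Psi.
Proof.
move=> /row_freeP [D ctrbD] x0.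
exists n.+1, (fun j => submxcol (D *m - (Phi ^+ n.+1 *m x0)) (inord (n - j))).
by rewrite disc_traj_ctrb_mx mulmxA ctrbD mul1mx addrN.
Qed.

Theorem corollary9 (R : realType) (N : nat) (a b c h : R) (W : 'M[R]_N)
  (delta : 'I_N -> bool) :
  (0 < N)%N -> a != 0 -> (forall i, W i i = 0) -> 0 < h ->
  cont_controllable (a%:M + c *: W) (b *: Delta_mx (R := R) delta) ->
  disc_controllable
    ((expR (a * h))%:M + (c / a * (expR (a * h) - 1)) *: W)
    ((b / a * (expR (a * h) - 1)) *: Delta_mx (R := R) delta).
Proof.
move=> N_gt0 a_neq0 _ h_gt0.
case: N W delta N_gt0 => // n W delta _ ctrlAB.
set e := expR (a * h); set k := (e - 1) / a.
have k_neq0 : k != 0.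
  rewrite mulf_neq0 ?invr_eq0 // subr_eq0 -expR0 (inj_eq (@expR_inj R)).
  by rewrite mulf_neq0 // lt0r_neq0.
have -> : e%:M + (c / a * (e - 1)) *: W = 1%:M + k *: (a%:M + c *: W).
  rewrite scalerDr scale_scalar_mx addrA -raddfD scalerA /k.
  by congr (_%:M + _ *: W); field.
have -> : (b / a * (e - 1)) *: Delta_mx (R := R) delta = k *: (b *: Delta_mx delta).
  by rewrite scalerA /k; congr (_ *: _); field.
apply: row_free_disc_controllable.
by rewrite /row_free mxrank_ctrb_affine //; apply/eqP.
Qed.
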